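(* Let $F:\mathbb{R}^n\to\mathbb{R}$ be a finite PL function and let $M>0$ be such that $F(C)\subseteq[-M,M]$ for every flat cell $C$. Let $n_{\pm}$ be the number of connected components of $\{F\le\pm M\}$ and $n^{\pm}$ the number of connected components of $\{F\ge \pm M\}$. Then (i) $|n_- - n_+|\le \operatorname{rank} H_*(\{F\le M\},\{F\le -M\})$ (the coarse bounded sublevel $H$-complexity), and (ii) $|n^+ - n^-|\le \operatorname{rank} H_*(\{F\ge -M\},\{F\ge M\})$ (the coarse bounded superlevel $H$-complexity).
   Context: A finite PL function $F:\mathbb{R}^n\to\mathbb{R}$ is a continuous function that is affine-linear on each cell of some finite polyhedral complex $\mathcal{C}$ (finite collection of polyhedral sets, closed under taking faces, pairwise intersecting in common faces) with $|\mathcal{C}|=\mathbb{R}^n$; a cell is flat if $F$ is constant on it (all $0$-cells are flat). $\{F\le t\}=F^{-1}((-\infty,t])$, $\{F\ge t\}=F^{-1}([t,\infty))$. $H_*$ denotes singular homology with $\mathbb{Z}$ coefficients and $\operatorname{rank}H_*$ the sum over all degrees of the ranks. *)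

From HB Require Import structures.
From mathcomp Require Import all_boot all_order all_algebra.
From mathcomp Require Import all_classical all_reals all_analysis.
Set Implicit Arguments. Unset Strict Implicit. Unset Printing Implicit Defensive.
Import Order.TTheory GRing.Theory Num.Theory.
Import numFieldNormedType.Exports.
Local Open Scope classical_set_scope.
Local Open Scope ring_scope.

Section Defs.
Variable R : realType.

Definition dotp (n : nat) (a x : 'rV[R]_n) : R := \sum_(i < n) a 0 i * x 0 i.

Definition halfspace (n : nat) (a : 'rV[R]_n) (b : R) : set 'rV[R]_n :=
  [set x | dotp a x <= b].

Definition hyperplane (n : nat) (a : 'rV[R]_n) (b : R) : set 'rV[R]_n :=
  [set x | dotp a x = b].

Definition polyhedron (n : nat) (P : set 'rV[R]_n) : Prop :=
  exists (k : nat) (a : 'I_k -> 'rV[R]_n) (b : 'I_k -> R),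
    P = [set x | forall j : 'I_k, halfspace (a j) (b j) x].

(* Q is a face of the polyhedron P: the intersection of P with a
   supporting hyperplane (a = 0, b = 0 gives P itself; a = 0, b = 1 gives
   the empty face). *)
Definition face (n : nat) (Q P : set 'rV[R]_n) : Prop :=
  exists (a : 'rV[R]_n) (b : R), P `<=` halfspace a b /\ Q = P `&` hyperplane a b.

Definition polyhedral_complex (n m : nat) (C : 'I_m -> set 'rV[R]_n) : Prop :=
  [/\ forall i, polyhedron (C i),
      forall i Q, face Q (C i) -> exists j, C j = Q
    & forall i j, face (C i `&` C j) (C i) /\ face (C i `&` C j) (C j)].

Definition affine_on (n : nat) (F : 'rV[R]_n -> R) (P : set 'rV[R]_n) : Prop :=
  exists (a : 'rV[R]_n) (c : R), forall x, P x -> F x = dotp a x + c.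

Definition flat_cell (n : nat) (F : 'rV[R]_n -> R) (P : set 'rV[R]_n) : Prop :=
  exists c : R, forall x, P x -> F x = c.

Definition finite_PL (n m : nat) (F : 'rV[R]_n -> R) (C : 'I_m -> set 'rV[R]_n) : Prop :=
  [/\ continuous F, polyhedral_complex C,
      \bigcup_(i in [set: 'I_m]) C i = [set: 'rV[R]_n]
    & forall i, affine_on F (C i)].

Definition components (n : nat) (A : set 'rV[R]_n) : set (set 'rV[R]_n) :=
  connected_component A @` A.

Definition ncomp (n : nat) (A : set 'rV[R]_n) (k : nat) : Prop :=
  is_true (card_eq (components A) `I_k).

Definition std_simplex (k : nat) : set 'rV[R]_k.+1 :=
  [set t | (forall i, 0 <= t 0 i) /\ \sum_(i < k.+1) t 0 i = 1].
Arguments std_simplex : clear implicits.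

(* a singular k-simplex is represented by a map on R^(k+1), normalized to
   be 0 outside the standard simplex (so that it is determined by its
   restriction to the standard simplex) *)
Definition sing_simplex (n k : nat) := 'rV[R]_k.+1 -> 'rV[R]_n.

Definition admissible (n k : nat) (X : set 'rV[R]_n) (s : sing_simplex n k) : Prop :=
  [/\ {within (std_simplex k), continuous s},
      s @` std_simplex k `<=` X
    & forall t, ~ std_simplex k t -> s t = 0].

Definition chain (n k : nat) := seq (int * sing_simplex n k).

Definition coef (n k : nat) (c : chain n k) (s : sing_simplex n k) : int :=
  \sum_(p <- c) (if `[< p.2 = s >] then p.1 else 0).

(* equality of chains in the free abelian group *)
Definition chain_eq (n k : nat) (c d : chain n k) : Prop :=
  forall s, coef c s = coef d s.

Definition chain_in (n k : nat) (X : set 'rV[R]_n) (c : chain n k) : Prop :=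
  forall p, p \in c -> admissible X p.2.

Definition scale_chain (n k : nat) (l : int) (c : chain n k) : chain n k :=
  [seq (l * p.1, p.2) | p <- c].

Definition coface (k : nat) (i : 'I_k.+2) (t : 'rV[R]_k.+1) : 'rV[R]_k.+2 :=
  \row_(j < k.+2) (if (j < i)%N then t 0 (inord j)
                   else if (j == i :> nat) then 0 else t 0 (inord j.-1)).

Definition face_map (n k : nat) (s : sing_simplex n k.+1) (i : 'I_k.+2) :
  sing_simplex n k :=
  fun t => if `[< std_simplex k t >] then s (coface i t) else 0.

Definition boundary (n k : nat) (c : chain n k.+1) : chain n k :=
  flatten [seq [seq (((-1) ^+ i : int) * p.1, face_map p.2 i) | i : 'I_(k.+2) <- enum 'I_(k.+2)]
          | p <- c].

(* relative cycles of (X, A) in degree k: boundary lies in C_{k-1}(A) *)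
Definition rel_cycle (n : nat) (X A : set 'rV[R]_n) (k : nat) : chain n k -> Prop :=
  match k return chain n k -> Prop with
  | 0 => fun c => chain_in X c
  | k'.+1 => fun c => chain_in X c /\
                      exists a : chain n k', chain_in A a /\ chain_eq (boundary c) a
  end.

(* relative boundaries: elements of B_k(X) + C_k(A) *)
Definition rel_boundary (n : nat) (X A : set 'rV[R]_n) (k : nat) (c : chain n k) : Prop :=
  exists (w : chain n k.+1) (a : chain n k),
    [/\ chain_in X w, chain_in A a & chain_eq c (boundary w ++ a)].

Definition lincomb (n k r : nat) (l : 'I_r -> int) (f : 'I_r -> chain n k) : chain n k :=
  flatten [seq scale_chain (l i) (f i) | i <- enum 'I_r].

(* H_k(X, A; Z) contains r Z-linearly independent classes *)
Definition hrank_deg_ge (n : nat) (X A : set 'rV[R]_n) (k r : nat) : Prop :=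
  exists f : 'I_r -> chain n k,
    (forall i, rel_cycle X A (f i)) /\
    (forall l : 'I_r -> int, rel_boundary X A (lincomb l f) -> forall i, l i = 0).

(* rank H_*(X, A; Z) = sum over all degrees of rank H_k(X, A; Z) is >= r
   (ranks understood as maximal sizes of Z-independent families, so that
   this also makes sense if the rank is infinite). *)
Definition hrank_ge (n : nat) (X A : set 'rV[R]_n) (r : nat) : Prop :=
  exists ms : seq nat,
    (r <= sumn ms)%N /\ forall k, (k < size ms)%N -> hrank_deg_ge X A k (nth 0%N ms k).

End Defs.

(* Both sublevel sets are finite
   unions of the closed convex pieces C_i ∩ {F <= t}, and superlevel sets of F
   are sublevel sets of -F.  For A ⊆ X with X such a union, the exact sequence
   H_1(X,A) -> H_0(A) -> H_0(X) -> H_0(X,A) -> 0 bounds |n_A - n_X|, and the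
   needed independent classes are exhibited with integer cochains:
   - a point in each of the (at least n_X - n_A) components of X missing A
     gives relative 0-cycles, dual to the indicators of these components;
   - if n_A > n_X, n_A - n_X components of A share their component of X with
     a chosen representative component of A; polygonal paths in X from the
     representative give relative 1-cycles, dual to the coboundaries of the
     indicators of the components of A. *)

From HB Require Import structures.
From mathcomp Require Import all_boot all_order all_algebra.
From mathcomp Require Import all_classical all_reals all_analysis.
From mathcomp Require Import zify ring lra.
Import Order.TTheory GRing.Theory Num.Theory.
Import numFieldNormedType.Exports.
Local Open Scope classical_set_scope.
Local Open Scope ring_scope.
Set Implicit Arguments. Unset Strict Implicit. Unset Printing Implicit Defensive.

Section Cochains.
Variables (R : realType) (n : nat).
Implicit Types (X A : set 'rV[R]_n).

Definition chain_eval k (phi : sing_simplex R n k -> int) (c : chain R n k) : int :=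
  \sum_(p <- c) p.1 * phi p.2.

Definition coboundary k (phi : sing_simplex R n k -> int) (s : sing_simplex R n k.+1) :
  int := \sum_(i < k.+2) (-1) ^+ i * phi (face_map s i).

Lemma chain_eval_cat k phi (c d : chain R n k) :
  chain_eval phi (c ++ d) = chain_eval phi c + chain_eval phi d.
Proof. exact: big_cat. Qed.

Lemma chain_eval_seq1 k phi (l : int) (s : sing_simplex R n k) :
  chain_eval phi [:: (l, s)] = l * phi s.
Proof. by rewrite /chain_eval big_seq1. Qed.

Lemma chain_eval_flatten k phi (cs : seq (chain R n k)) :
  chain_eval phi (flatten cs) = \sum_(c <- cs) chain_eval phi c.
Proof.
elim: cs => [|c cs IH]; first by rewrite /chain_eval !big_nil.
by rewrite /= chain_eval_cat IH big_cons.
Qed.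

Lemma chain_eval_scale k phi l (c : chain R n k) :
  chain_eval phi (scale_chain l c) = l * chain_eval phi c.
Proof.
rewrite /chain_eval big_map mulr_sumr; apply: eq_bigr => p _ /=.
by rewrite mulrA.
Qed.

Lemma chain_eval_lincomb k r phi (l : 'I_r -> int) (f : 'I_r -> chain R n k) :
  chain_eval phi (lincomb l f) = \sum_(i < r) l i * chain_eval phi (f i).
Proof.
rewrite chain_eval_flatten big_map big_enum /=.
by apply: eq_bigr => i _; rewrite chain_eval_scale.
Qed.

Lemma chain_eval_boundary k phi (w : chain R n k.+1) :
  chain_eval phi (boundary w) = chain_eval (coboundary phi) w.
Proof.
rewrite chain_eval_flatten big_map; apply: eq_bigr => p _.
rewrite /chain_eval big_map big_enum /= /coboundary mulr_sumr.
by apply: eq_bigr => i _ /=; rewrite mulrCA mulrA.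
Qed.

Lemma coef_chain_eval k (c : chain R n k) s :
  coef c s = chain_eval (fun s' => (`[< s' = s >] : bool)%:R) c.
Proof. by apply: eq_bigr => p _; case: ifP; rewrite ?mulr1 ?mulr0. Qed.

Lemma chain_eval_coef k phi (c : chain R n k) (U : seq (sing_simplex R n k)) :
  uniq U -> {subset map snd c <= U} ->
  chain_eval phi c = \sum_(s <- U) coef c s * phi s.
Proof.
move=> uU; elim: c => [|p c IH] sub.
  by rewrite /chain_eval big_nil big1 // => s _; rewrite /coef big_nil mul0r.
have pU : p.2 \in U by apply: sub; rewrite inE eqxx.
rewrite /chain_eval big_cons -/(chain_eval phi c) IH; last first.
  by move=> s sc; apply: sub; rewrite inE sc orbT.
under [RHS]eq_bigr => s _ do rewrite /coef big_cons -/(coef c s) mulrDl.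
rewrite big_split /=; congr (_ + _).
rewrite (bigD1_seq p.2) //= asboolT // big1 ?addr0 // => s /negPf sp.
by rewrite asboolF ?mul0r // => e; move: sp; rewrite e eqxx.
Qed.

Lemma chain_eval_eq k phi (c d : chain R n k) :
  chain_eq c d -> chain_eval phi c = chain_eval phi d.
Proof.
move=> e; set U := undup (map snd (c ++ d)).
have [cU dU] : {subset map snd c <= U} /\ {subset map snd d <= U}.
  by split=> s; rewrite mem_undup map_cat mem_cat => ->; rewrite ?orbT.
rewrite (chain_eval_coef _ (undup_uniq _) cU) (chain_eval_coef _ (undup_uniq _) dU).
by apply: eq_bigr => s _; rewrite e.
Qed.

Definition rel_cocycle X A k (phi : sing_simplex R n k -> int) : Prop :=
  (forall s, admissible X s -> coboundary phi s = 0) /\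
  (forall s, admissible A s -> phi s = 0).

Lemma rel_cocycle_boundary X A k (phi : sing_simplex R n k -> int) c :
  rel_cocycle X A phi -> rel_boundary X A c -> chain_eval phi c = 0.
Proof.
move=> [dphi0 phiA] [w [a [wX aA /(chain_eval_eq phi) ->]]].
rewrite chain_eval_cat chain_eval_boundary.
rewrite /chain_eval !big1_seq ?addr0 // => p /andP[_ pin].
  by rewrite phiA ?mulr0 //; apply: aA.
by rewrite dphi0 ?mulr0 //; apply: wX.
Qed.

Lemma hrank_deg_ge_dual X A k r (f : 'I_r -> chain R n k)
    (phi : 'I_r -> sing_simplex R n k -> int) :
  (forall i, rel_cycle X A (f i)) -> (forall j, rel_cocycle X A (phi j)) ->
  (forall i j, chain_eval (phi j) (f i) = (i == j)%:R) ->
  hrank_deg_ge X A k r.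
Proof.
move=> fcyc phicoc dual; exists f; split => // l lbd j.
have := rel_cocycle_boundary (phicoc j) lbd; rewrite chain_eval_lincomb.
rewrite (bigD1 j) //= dual eqxx mulr1 big1 ?addr0 // => i /negPf ij.
by rewrite dual ij mulr0.
Qed.

End Cochains.

Section Simplices.
Variables (R : realType) (n : nat).
Local Notation V := 'rV[R]_n.

Definition vertex (k j : nat) : 'rV[R]_k.+1 :=
  \row_(m < k.+1) (if (m == j :> nat) then 1 else 0).

Lemma coface_vertex k (i : 'I_k.+2) j : (j < k.+1)%N ->
  coface i (vertex k j) = vertex k.+1 (bump i j).
Proof.
move=> jk; apply/rowP => l; rewrite !mxE /bump.
case: (ltngtP l i) => li.
- rewrite inordK; last by have := ltn_ord i; lia.
  case: (leqP i j) => ij; last by rewrite add0n.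
  by rewrite !ifF //; apply/eqP; lia.
- rewrite inordK; last by have := ltn_ord l; lia.
  case: (leqP i j) => ij; last by rewrite !ifF //; apply/eqP; lia.
  by rewrite add1n; congr (if _ then _ else _); apply/eqP/eqP; lia.
- by rewrite li ifF //; apply/eqP; case: (leqP i j) => ij; lia.
Qed.

Lemma vertex_std k j : (j < k.+1)%N -> std_simplex (vertex k j).
Proof.
move=> jk; split => [i|]; first by rewrite mxE; case: ifP; rewrite ?ler01.
rewrite (bigD1 (Ordinal jk)) //= mxE eqxx big1 ?addr0 // => i ne.
by rewrite mxE ifF //; apply: contraNF ne => /eqP e; apply/eqP/val_inj.
Qed.

Lemma std_simplex0 (t : 'rV[R]_1) : std_simplex t -> t = vertex 0 0.
Proof.
move=> [_ s]; apply/rowP => j; rewrite mxE (ord1 j) /=.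
by rewrite big_ord1 in s; rewrite -s.
Qed.

Lemma std_simplex1 (t : 'rV[R]_2) : std_simplex t ->
  [/\ 0 <= t ord0 ord0, 0 <= t ord0 (lift ord0 ord0)
    & t ord0 ord0 + t ord0 (lift ord0 ord0) = 1].
Proof. by move=> [t_ge0 s]; rewrite big_ord_recl big_ord1 in s. Qed.

Lemma std_simplex1_connected : connected (@std_simplex R 1).
Proof.
pose h := fun s : R => vertex 1 0 + s *: (vertex 1 1 - vertex 1 0).
have -> : @std_simplex R 1 = h @` `[0, 1]%classic.
  apply/seteqP; split => t.
  - move=> /std_simplex1[t0 t1 t01]; exists (t ord0 (lift ord0 ord0)).
      by rewrite /= in_itv /= t1 /=; lra.
    apply/rowP => j; rewrite /h !mxE; case: j => -[|[|//]] i /=.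
      have -> : Ordinal i = ord0 :> 'I_2 by apply/val_inj.
      lra.
    have -> : Ordinal i = lift ord0 ord0 :> 'I_2 by apply/val_inj.
    lra.
  - move=> [s]; rewrite /= in_itv /= => /andP[s0 s1] <-; split.
      by move=> j; rewrite /h !mxE; case: j => -[|[|//]] ? /=; lra.
    by rewrite big_ord_recl big_ord1 /h !mxE /=; lra.
apply: connected_continuous_connected; first exact: segment_connected.
apply: continuous_subspaceT => s.
apply: (@continuousD _ _ _ (fun=> vertex 1 0) (fun s : R => s *: (vertex 1 1 - vertex 1 0))).
  exact: cst_continuous.
exact: continuousZr_tmp.
Qed.

Lemma face_map_vertex k (s : sing_simplex R n k.+1) (i : 'I_k.+2) j : (j < k.+1)%N ->
  face_map s i (vertex k j) = s (vertex k.+1 (bump i j)).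
Proof. by move=> jk; rewrite /face_map asboolT ?coface_vertex //; apply: vertex_std. Qed.

Definition pt (x : V) : sing_simplex R n 0 :=
  fun t => if `[< std_simplex t >] then x else 0.

Definition seg (x y : V) : sing_simplex R n 1 := fun t =>
  if `[< std_simplex t >] then t ord0 ord0 *: x + t ord0 (lift ord0 ord0) *: y
  else 0.

Lemma face_map_seg x y (i : 'I_2) :
  face_map (seg x y) i = pt (if (i == 0 :> nat) then y else x).
Proof.
apply/funext => t; rewrite /face_map /pt.
case: (pselect (std_simplex t)) => ht; last by rewrite (asboolF ht).
rewrite asboolT // (std_simplex0 ht) coface_vertex // /seg asboolT; last first.
  by apply: vertex_std; rewrite /bump; case: (i <= 0)%N.
case: i => -[|[|//]] ? /=; rewrite /bump /vertex /= !mxE /=.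
  by rewrite scale0r add0r scale1r.
by rewrite scale0r addr0 scale1r.
Qed.

Lemma pt_admissible (X : set V) x : X x -> admissible X (pt x).
Proof.
move=> Xx; split.
- apply: (@subspace_eq_continuous _ _ _ (fun _ => x)); last exact: cst_continuous.
  by move=> t; rewrite inE => ht /=; rewrite /from_subspace /pt (asboolT ht).
- by move=> _ [t ht <-]; rewrite /pt (asboolT ht).
- by move=> t ht; rewrite /pt (asboolF ht).
Qed.

Lemma seg_admissible (X : set V) x y :
  (forall a b : R, 0 <= a -> 0 <= b -> a + b = 1 -> X (a *: x + b *: y)) ->
  admissible X (seg x y).
Proof.
move=> segX; split.
- apply: (@subspace_eq_continuous _ _ _
    (fun t : 'rV[R]_2 => t ord0 ord0 *: x + t ord0 (lift ord0 ord0) *: y)).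
    by move=> t; rewrite inE => ht /=; rewrite /from_subspace /seg (asboolT ht).
  apply: continuous_subspaceT => t.
  apply: (@continuousD _ _ _ (fun t : 'rV[R]_2 => t ord0 ord0 *: x)
    (fun t : 'rV[R]_2 => t ord0 (lift ord0 ord0) *: y));
    by apply: continuousZr_tmp; exact: coord_continuous.
- by move=> _ [t /[dup] /std_simplex1[? ? ?] ht <-]; rewrite /seg (asboolT ht); apply: segX.
- by move=> t ht; rewrite /seg (asboolF ht).
Qed.

Lemma admissible_edge_component (X : set V) (s : sing_simplex R n 1) :
  admissible X s -> connected_component X (s (vertex 1 0)) (s (vertex 1 1)).
Proof.
move=> [s_cont sX _].
have s0 : (s @` @std_simplex R 1) (s (vertex 1 0)) by exists (vertex 1 0) => //; apply: vertex_std.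
apply: (connected_component_max s0 sX).
  exact: connected_continuous_connected std_simplex1_connected s_cont.
by exists (vertex 1 1) => //; apply: vertex_std.
Qed.

Definition vertex_cochain (g : V -> int) (s : sing_simplex R n 0) : int :=
  g (s (vertex 0 0)).

Definition edge_cochain (g : V -> int) (s : sing_simplex R n 1) : int :=
  g (s (vertex 1 1)) - g (s (vertex 1 0)).

Lemma vertex_cochain_pt g x : vertex_cochain g (pt x) = g x.
Proof. by rewrite /vertex_cochain /pt asboolT //; apply: vertex_std. Qed.

Lemma coboundary_vertex_cochain g : coboundary (vertex_cochain g) = edge_cochain g.
Proof.
apply/funext => s; rewrite /coboundary !big_ord_recl big_ord0.
rewrite /vertex_cochain !face_map_vertex // /bump /= /edge_cochain.
by rewrite expr0 expr1 mul1r mulN1r addr0 addrC.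
Qed.

Lemma coboundary_edge_cochain g (s : sing_simplex R n 2) :
  coboundary (edge_cochain g) s = 0.
Proof.
rewrite /coboundary !big_ord_recl big_ord0 /edge_cochain !face_map_vertex // /bump /=.
rewrite expr0 expr1 expr2 mulrNN mulr1 !mul1r mulN1r addr0.
set a := g (s _); set b := g (s _); set c := g (s _).
lia.
Qed.

End Simplices.
Arguments vertex {R}.

Section Components.
Variables (R : realType) (n : nat).
Local Notation V := 'rV[R]_n.

Lemma ncomp_representatives (X : set V) k : ncomp X k ->
  exists x : 'I_k -> V,
  [/\ forall i, X (x i),
      forall i j, connected_component X (x i) (x j) -> i = j
    & forall y, X y -> exists i, connected_component X (x i) y].
Proof.
move=> /card_set_bijP[f [f_fun f_inj f_surj]].
have /choice[x xP] : forall i : 'I_k, exists y, X y /\ f (connected_component X y) = i.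
  by move=> i; have [_ [y Xy <-] fi] := f_surj i (ltn_ord i); exists y.
exists x; split => [i|i j xij|y Xy]; first exact: (xP i).1.
  by apply: ord_inj; rewrite -(xP i).2 -(xP j).2 (same_connected_component xij).
have compy : components X (connected_component X y) by exists y.
set i := Ordinal (f_fun _ compy); exists i.
suff -> : connected_component X (x i) = connected_component X y.
  exact: connected_component_refl.
apply: f_inj; [|exact: mem_set compy|by rewrite (xP i).2].
by apply/mem_set; exists (x i) => //; exact: (xP i).1.
Qed.

Lemma connected_component_subset (A X : set V) a y : A `<=` X ->
  connected_component A a y -> connected_component X a y.
Proof. by move=> AX [K [Ka KA Kc] Ky]; exists K => //; split => // z /KA /AX. Qed.

Lemma indicator_component (X : set V) k (x : 'I_k -> V) i j :
  X (x i) -> (forall i j, connected_component X (x i) (x j) -> i = j) ->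
  \1_(connected_component X (x j)) (x i) = (i == j)%:R :> int.
Proof.
move=> Xxi x_inj; rewrite indicE; have [<-|ij] := eqVneq i j.
  by rewrite mem_set //; exact: connected_component_refl.
by rewrite memNset // => /connected_component_sym /x_inj ij'; rewrite ij' eqxx in ij.
Qed.

Lemma edge_cochain_component (Y : set V) c (s : sing_simplex R n 1) :
  admissible Y s -> edge_cochain (\1_(connected_component Y c)) s = 0 :> int.
Proof.
move=> /admissible_edge_component s01; rewrite /edge_cochain !indicE.
suff -> : (s (vertex 1 1) \in connected_component Y c) =
          (s (vertex 1 0) \in connected_component Y c) by rewrite subrr.
apply/idP/idP => /set_mem K_s; apply/mem_set.
  exact: connected_component_trans K_s (connected_component_sym s01).
exact: connected_component_trans K_s s01.
Qed.

End Components.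

Lemma subset_injection N r (S : {set 'I_N}) : (r <= #|S|)%N ->
  exists h : 'I_r -> 'I_N, injective h /\ forall i, h i \in S.
Proof.
move=> rS; exists (fun i => enum_val (widen_ord rS i)); split; last by move=> i; apply: enum_valP.
by move=> i j /enum_val_inj /(congr1 val) /= ij; apply: ord_inj.
Qed.

Lemma injection_avoiding_image a b (pi : 'I_a -> 'I_b) :
  exists h : 'I_(b - a) -> 'I_b, injective h /\ forall i j, pi i != h j.
Proof.
pose B := (pi @: [set: 'I_a])%SET.
have : (b - a <= #|~: B|)%N.
  have := cardsC B; have := leq_imset_card pi [set: 'I_a]%SET.
  by rewrite cardsT !card_ord -/B; lia.
move=> /subset_injection[h [h_inj h_off]]; exists h; split => // i j.
by apply/eqP => pih; move: (h_off j); rewrite -pih inE imset_f ?inE.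
Qed.

Lemma fibre_representatives_injection a b (pi : 'I_a -> 'I_b) :
  exists (rep : 'I_a -> 'I_a) (h : 'I_(a - b) -> 'I_a),
  [/\ forall i, pi (rep i) = pi i, injective h & forall i j, rep (h i) != h j].
Proof.
pose rep i := odflt i [pick k | pi k == pi i].
have pi_rep i : pi (rep i) = pi i.
  by rewrite /rep; case: pickP => [k /eqP|/(_ i)]; rewrite ?eqxx.
have rep_eq i j : pi i = pi j -> rep i = rep j.
  move=> pij; rewrite /rep (eq_pick (Q := fun k => pi k == pi j)) => [|k]; last by rewrite pij.
  by case: pickP => // /(_ j); rewrite eqxx.
have rep_idem i : rep (rep i) = rep i by apply: rep_eq; apply: pi_rep.
set N := [set i | rep i != i]%SET.
have : (a - b <= #|N|)%N.
  have pi_inj : {in ~: N &, injective pi}.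
    by move=> i j; rewrite !inE !negbK => /eqP ei /eqP ej /rep_eq; rewrite ei ej.
  have := card_in_imset pi_inj; have := max_card (pi @: ~: N)%SET; have := cardsC N.
  by rewrite !card_ord; lia.
move=> /subset_injection[h [h_inj hN]]; exists rep, h; split => // i j.
by apply/eqP => rep_hij; move: (hN j); rewrite inE -rep_hij rep_idem eqxx.
Qed.

Lemma hrank0_ncomp (R : realType) (n : nat) (X A : set 'rV[R]_n) nX nA :
  A `<=` X -> ncomp X nX -> ncomp A nA -> hrank_deg_ge X A 0 (nX - nA).
Proof.
move=> AX /ncomp_representatives[x [Xx x_inj x_cover]].
move=> /ncomp_representatives[a [Aa _ a_cover]].
have /choice[pi a_pi] : forall i, exists j, connected_component X (x j) (a i).
  by move=> i; apply: x_cover; apply: AX.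
have [h [h_inj pi_h]] := injection_avoiding_image pi.
have A_off j y : A y -> ~ connected_component X (x (h j)) y.
  move=> Ay xhy; have [i ay] := a_cover y Ay.
  have xy := connected_component_trans (a_pi i) (connected_component_subset AX ay).
  have /x_inj pih := connected_component_trans xy (connected_component_sym xhy).
  by move/eqP: (pi_h i j).
apply: (@hrank_deg_ge_dual _ _ _ _ _ _ (fun i => [:: (1, pt (x (h i)))])
  (fun j => vertex_cochain (\1_(connected_component X (x (h j)))))).
- by move=> i p; rewrite inE => /eqP ->; apply: pt_admissible.
- move=> j; split => s s_adm.
    by rewrite coboundary_vertex_cochain; apply: edge_cochain_component.
  have [_ sA _] := s_adm; rewrite /vertex_cochain indicE memNset //.
  by apply: A_off; apply: sA; exists (vertex 0 0) => //; apply: vertex_std.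
- move=> i j; rewrite chain_eval_seq1 mul1r vertex_cochain_pt.
  by rewrite (indicator_component _ _ x_inj) // (inj_eq h_inj).
Qed.

Section PolygonalPaths.
Variables (R : realType) (n : nat).
Local Notation V := 'rV[R]_n.

Definition convex (S : set V) : Prop :=
  forall u v (a b : R), S u -> S v -> 0 <= a -> 0 <= b -> a + b = 1 ->
  S (a *: u + b *: v).

Fixpoint polygon (x : V) (xs : seq V) : chain R n 1 :=
  if xs is y :: ys then (1, seg x y) :: polygon y ys else [::].

Lemma chain_eval_coboundary_polygon (phi : sing_simplex R n 0 -> int) x xs :
  chain_eval (coboundary phi) (polygon x xs) = phi (pt (last x xs)) - phi (pt x).
Proof.
elim: xs x => [|y ys IH] x /=; first by rewrite /chain_eval big_nil subrr.
rewrite /chain_eval big_cons -/(chain_eval _ _) IH /coboundary.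
rewrite !big_ord_recl big_ord0 !face_map_seg /= expr0 expr1 mulN1r !mul1r addr0.
set a := phi _; set b := phi _; set c := phi _; lia.
Qed.

Lemma boundary_polygon x xs :
  chain_eq (boundary (polygon x xs)) [:: (1, pt (last x xs)); (-1, pt x)].
Proof.
move=> s; rewrite !coef_chain_eval chain_eval_boundary chain_eval_coboundary_polygon.
by rewrite /chain_eval !big_cons big_nil /= mul1r mulN1r addr0.
Qed.

Lemma chain_eval_edge_polygon g x xs :
  chain_eval (edge_cochain g) (polygon x xs) = g (last x xs) - g x.
Proof.
by rewrite -coboundary_vertex_cochain chain_eval_coboundary_polygon !vertex_cochain_pt.
Qed.

Fixpoint linked (Q : V -> V -> Prop) (x : V) (xs : seq V) : Prop :=
  if xs is y :: ys then Q x y /\ linked Q y ys else True.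

Lemma linked_rcons (Q : V -> V -> Prop) x xs z :
  linked Q x xs -> Q (last x xs) z -> linked Q x (rcons xs z).
Proof. by elim: xs x => [|y ys IH] x //= [Qxy l] /(IH _ l). Qed.

Variables (m : nat) (P : 'I_m -> set V) (X : set V).
Hypothesis X_cover : forall z, X z <-> exists i, P i z.
Hypothesis P_closed : forall i, closed (P i).
Hypothesis P_convex : forall i, convex (P i).

Definition same_piece (u v : V) : Prop := exists i, P i u /\ P i v.

Lemma polygon_chain_in x xs : linked same_piece x xs -> chain_in X (polygon x xs).
Proof.
elim: xs x => [|y ys IH] x //= [[i [Pix Piy]] l] p; rewrite inE => /orP[/eqP -> | p_in].
  by apply: seg_admissible => a b a0 b0 ab; apply/X_cover; exists i; apply: P_convex.
exact: IH l p p_in.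
Qed.

(* The points reachable from [x] by [same_piece]-linked chains form a union of
   pieces, and so do the other points of [X]: both are closed, so the
   reachable set is clopen in [X] and contains the component of [x]. *)
Lemma component_linked x y : X x -> connected_component X x y ->
  exists xs, linked same_piece x xs /\ last x xs = y.
Proof.
move=> Xx Kxy.
set Reach := [set z | exists xs, linked same_piece x xs /\ last x xs = z].
set I := [set i | exists2 z, P i z & Reach z].
have Reach_piece i z : I i -> P i z -> Reach z.
  move=> [w Piw [xs [l lw]]] Piz; exists (rcons xs z); rewrite last_rcons; split => //.
  by apply: linked_rcons => //; exists i; rewrite lw.
set K := connected_component X x.
have KX : K `<=` X by apply: connected_component_sub.
have piece z : K z -> exists i, P i z by move=> /KX /X_cover.
have pieces_closed (J : set 'I_m) : closed (\bigcup_(i in J) P i).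
  by apply: closed_bigcup => [|i _]; [exact: finite_finset | exact: P_closed].
have KReach : K `&` Reach = K.
  apply: (@component_connected _ X x).
  - by exists x; split; [exact: connected_component_refl | exists [::]].
  - exists (~` (\bigcup_(i in ~` I) P i)); first exact/closed_openC/pieces_closed.
    apply/seteqP; split => z [Kz Rz]; split => //.
      by move=> [i nIi Piz]; apply: nIi; exists z.
    have [i Piz] := piece z Kz.
    by have [Ii|nIi] := pselect (I i); [exact: Reach_piece Ii Piz | case: Rz; exists i].
  - exists (\bigcup_(i in I) P i); first exact: pieces_closed.
    apply/seteqP; split => z [Kz Rz]; split => //.
      by have [i Piz] := piece z Kz; exists i => //; exists z.
    by case: Rz => i Ii Piz; apply: Reach_piece Ii Piz.
have : (K `&` Reach) y by rewrite KReach.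
by move=> [_ [xs xsP]]; exists xs.
Qed.

Lemma hrank1_ncomp (A : set V) nX nA :
  A `<=` X -> ncomp X nX -> ncomp A nA -> hrank_deg_ge X A 1 (nA - nX).
Proof.
move=> AX /ncomp_representatives[x [_ _ x_cover]].
move=> /ncomp_representatives[a [Aa a_inj _]].
have /choice[pi a_pi] : forall i, exists j, connected_component X (x j) (a i).
  by move=> i; apply: x_cover; apply: AX.
have [rep [h [pi_rep h_inj rep_h]]] := fibre_representatives_injection pi.
have /choice[xs xsP] : forall i,
    exists xs, linked same_piece (a (rep i)) xs /\ last (a (rep i)) xs = a i.
  move=> i; apply: component_linked; first exact: AX.
  have := a_pi (rep i); rewrite pi_rep => /connected_component_sym.
  by move/connected_component_trans; apply.
apply: (@hrank_deg_ge_dual _ _ _ _ _ _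
  (fun i => polygon (a (rep (h i))) (xs (h i)))
  (fun j => edge_cochain (\1_(connected_component A (a (h j)))))).
- move=> i; split; first exact: polygon_chain_in (xsP _).1.
  exists [:: (1, pt (a (h i))); (-1, pt (a (rep (h i))))]; split.
    by move=> p; rewrite !inE => /orP[] /eqP ->; apply: pt_admissible.
  by have := boundary_polygon (a (rep (h i))) (xs (h i)); rewrite (xsP _).2.
- move=> j; split => s s_adm; first exact: coboundary_edge_cochain.
  exact: edge_cochain_component.
- move=> i j; rewrite chain_eval_edge_polygon (xsP _).2.
  rewrite !(indicator_component _ _ a_inj) // (inj_eq h_inj).
  by rewrite (negPf (rep_h i j)) subr0.
Qed.

Lemma hrank_ge_ncomp (A : set V) nX nA : A `<=` X -> ncomp X nX -> ncomp A nA ->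
  hrank_ge X A (maxn nA nX - minn nA nX).
Proof.
move=> AX cX cA; exists [:: (nX - nA)%N; (nA - nX)%N]; split; first by rewrite /=; lia.
by case=> [|[|//]] _; [exact: hrank0_ncomp | exact: hrank1_ncomp].
Qed.

End PolygonalPaths.

Section PLSublevelSets.
Variables (R : realType) (n m : nat).
Local Notation V := 'rV[R]_n.

Lemma dotp_continuous (a : V) : continuous (dotp a).
Proof.
apply: (continuous_big add_continuous) => i _ x.
apply: (@continuousM _ _ (fun=> a 0 i) (fun x : V => x 0 i)).
  exact: cst_continuous.
exact: coord_continuous.
Qed.

Lemma dotpDZ (a u v : V) (al be : R) :
  dotp a (al *: u + be *: v) = al * dotp a u + be * dotp a v.
Proof.
rewrite /dotp !mulr_sumr -big_split; apply: eq_bigr => i _ /=.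
by rewrite !mxE; ring.
Qed.

Lemma polyhedron_closed (P : set V) : polyhedron P -> closed P.
Proof.
move=> [k [a [b ->]]].
have -> : [set x | forall j, halfspace (a j) (b j) x] =
    \bigcap_(j in [set: 'I_k]) (dotp (a j) @^-1` [set y | y <= b j]).
  by apply/seteqP; split => x /= xP j; [move=> _|]; apply: xP.
apply: closed_bigI => j _; apply: preimage_closed; last exact: closed_le.
by move=> x _; apply: dotp_continuous.
Qed.

Lemma polyhedron_convex (P : set V) : polyhedron P -> convex P.
Proof.
move=> [k [a [b ->]]] u v al be /= Pu Pv al0 be0 albe j.
rewrite /halfspace /= dotpDZ -[b j]mul1r -albe mulrDl.
by apply: lerD; apply: ler_wpM2l; [|apply: Pu| |apply: Pv].
Qed.

Lemma finite_PL_opp (F : V -> R) (C : 'I_m -> set V) :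
  finite_PL F C -> finite_PL (fun x => - F x) C.
Proof.
move=> [F_cont C_complex C_cover F_aff]; split => // [x|i].
  by apply: continuousN; apply: F_cont.
have [a [c Fac]] := F_aff i; exists (- a), (- c) => x Cix.
rewrite Fac // opprD; congr (_ + _).
by rewrite /dotp -sumrN; apply: eq_bigr => j _; rewrite mxE mulNr.
Qed.

Lemma sublevel_pieces (F : V -> R) (C : 'I_m -> set V) (t : R) :
  finite_PL F C -> exists P : 'I_m -> set V,
  [/\ forall z, F z <= t <-> exists i, P i z, forall i, closed (P i)
    & forall i, convex (P i)].
Proof.
move=> [F_cont [C_poly _ _] C_cover F_aff].
exists (fun i => C i `&` [set x | F x <= t]); split.
- move=> z; split => [Fzt|[i [_ //]]].
  have : (\bigcup_(i in [set: 'I_m]) C i) z by rewrite C_cover.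
  by case=> i _ Ciz; exists i.
- move=> i; apply: closedI; first exact: polyhedron_closed.
  by apply: (@preimage_closed _ _ F [set y | y <= t]) => [x _|]; [apply: F_cont | apply: closed_le].
- move=> i u v al be [Ciu Fu] [Civ Fv] al0 be0 albe.
  have Cuv := polyhedron_convex (C_poly i) Ciu Civ al0 be0 albe.
  split => //; have [a [c Fac]] := F_aff i.
  move: Fu Fv; rewrite /= !Fac // dotpDZ => Fu Fv.
  nra.
Qed.

Lemma sublevel_hrank_ge (F : V -> R) (C : 'I_m -> set V) (s t : R) ns nt :
  finite_PL F C -> s <= t ->
  ncomp [set x | F x <= s] ns -> ncomp [set x | F x <= t] nt ->
  hrank_ge [set x | F x <= t] [set x | F x <= s] (maxn ns nt - minn ns nt).
Proof.
move=> F_PL st As Xt; have [P [P_cover P_closed P_convex]] := sublevel_pieces t F_PL.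
apply: (hrank_ge_ncomp (X := [set x | F x <= t]) P_cover P_closed P_convex) => //.
by move=> x /= /le_trans; apply.
Qed.

End PLSublevelSets.

Lemma superlevel_oppE (R : realType) (n : nat) (F : 'rV[R]_n -> R) (t : R) :
  [set x | t <= F x] = [set x | - F x <= - t].
Proof. by apply/seteqP; split => x /=; rewrite lerN2. Qed.

Theorem theorem1p5 (R : realType) (n m : nat) (F : 'rV[R]_n -> R)
    (C : 'I_m -> set 'rV[R]_n) (M : R) :
  finite_PL F C ->
  0 < M ->
  (forall i, flat_cell F (C i) -> F @` C i `<=` `[- M, M]) ->
  (forall nm np : nat,
     ncomp [set x | F x <= - M] nm -> ncomp [set x | F x <= M] np ->
     hrank_ge [set x | F x <= M] [set x | F x <= - M] (maxn nm np - minn nm np)%N)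
  /\
  (forall Np Nm : nat,
     ncomp [set x | M <= F x] Np -> ncomp [set x | - M <= F x] Nm ->
     hrank_ge [set x | - M <= F x] [set x | M <= F x] (maxn Np Nm - minn Np Nm)%N).
Proof.
move=> F_PL M_gt0 _; have MM : - M <= M by lra.
split=> [nm np | Np Nm]; first exact: sublevel_hrank_ge F_PL MM.
rewrite !superlevel_oppE opprK.
exact: sublevel_hrank_ge (finite_PL_opp F_PL) MM.
Qed.
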